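(* Let $G$ be a finite group, $R$ an integral domain and $X$ a transitive $G$-set. If no prime divisor of $|X|$ is invertible in $R$, then the $RG$-permutation module $RX$ is indecomposable. *)

From HB Require Import structures.
From mathcomp Require Import all_boot all_order all_algebra all_fingroup.
Set Implicit Arguments. Unset Strict Implicit. Unset Printing Implicit Defensive.
Import GRing.Theory.
Local Open Scope ring_scope.

(* The permutation module RX over a ring R for a finite G-set X (carrier T,
   G acting through the action [to]) is the free R-module {ffun T -> R} with
   basis the indicator functions of points; g acts by (g.f)(x) = f(x^(g^-1)),
   which sends the basis vector of x to that of x^g. *)
Definition perm_act (gT : finGroupType) (T : finType) (R : nzRingType)
  (to : {action gT &-> T}) (g : gT) (f : {ffun T -> R}) : {ffun T -> R} :=
  [ffun x => f (to x (g^-1)%g)].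

Definition is_RGsubmod (gT : finGroupType) (G : {group gT}) (T : finType)
  (R : nzRingType) (to : {action gT &-> T}) (M : {ffun T -> R} -> Prop) :=
  [/\ M 0,
      (forall u v, M u -> M v -> M (u + v)),
      (forall (a : R) u, M u -> M [ffun x => a * u x]) &
      (forall g u, g \in G -> M u -> M (perm_act to g u))].

Definition RG_perm_indecomposable (gT : finGroupType) (G : {group gT})
  (T : finType) (R : nzRingType) (to : {action gT &-> T}) : Prop :=
  (exists v : {ffun T -> R}, v <> 0) /\
  forall M N : {ffun T -> R} -> Prop,
    is_RGsubmod G to M -> is_RGsubmod G to N ->
    (forall v, M v -> N v -> v = 0) ->
    (forall v, exists m n, [/\ M m, N n & v = m + n]) ->
    (forall m, M m -> m = 0) \/ (forall n, N n -> n = 0).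

From HB Require Import structures.
From mathcomp Require Import all_boot all_order all_algebra all_fingroup all_solvable.
From Stdlib Require Import Classical IndefiniteDescription.
Set Implicit Arguments. Unset Strict Implicit. Unset Printing Implicit Defensive.
Import GRing.Theory.
Local Open Scope ring_scope.

(* In prime characteristic q every prime other than q is a unit of R, so |X|
   is a power of q and a Sylow q-subgroup Q of G is still transitive on X.  A
   q-group acting on a nonzero module in characteristic q fixes a nonzero
   vector, and the Q-fixed vectors of RX are the constant ones; hence any two
   nonzero RG-submodules of RX meet in a nonzero constant vector.
   In characteristic 0, the projection of RX = M (+) N onto N is an idempotent
   RG-endomorphism whose matrix has a constant diagonal b by transitivity.
   Over the fraction field its trace |X| b equals its rank r, and if
   0 < r < |X| then writing r/|X| in lowest terms exhibits a prime divisor of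
   |X| that is a unit of R.  So the projection is 0 or the identity. *)

Lemma coprime_natr_unit (R : comUnitRingType) u w (b : R) :
  (0 < w)%N -> coprime w u -> u%:R * b = w%:R -> (u%:R : R) \is a GRing.unit.
Proof.
move=> w_gt0 co_wu Eb; have [km kn Bezout _] := egcdnP u w_gt0.
apply/unitrPr; exists (km%:R * b - kn%:R).
rewrite mulrBr mulrCA Eb -!natrM.
by rewrite Bezout (eqP co_wu) mulnC natrD addrAC subrr add0r.
Qed.

Lemma natr_ratio_trivial (R : idomainType) n r (b : R) :
    [pchar R] =i pred0 ->
    (forall p, prime p -> (p %| n)%N -> ~~ ((p%:R : R) \is a GRing.unit)) ->
  (r <= n)%N -> n%:R * b = r%:R -> r = 0%N \/ r = n.
Proof.
move=> char0 n_nonunit le_rn Eb.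
have [->|r_gt0] := posnP r; [by left | right].
set d := gcdn r n; have d_gt0 : (0 < d)%N by rewrite gcdn_gt0 r_gt0.
have Er : r = (r %/ d * d)%N by rewrite divnK ?dvdn_gcdl.
have En : n = (n %/ d * d)%N by rewrite divnK ?dvdn_gcdr.
set r' := (r %/ d)%N in Er *; set n' := (n %/ d)%N in En *.
have co : coprime r' n'.
  by rewrite /coprime -(@eqn_pmul2r d) // muln_gcdl -Er -En mul1n.
have Eb' : n'%:R * b = r'%:R :> R.
  apply: (mulfI (_ : d%:R != 0)); first by rewrite (pcharf0P R).1 // -lt0n.
  by rewrite mulrA -!natrM mulnC -En Eb mulnC -Er.
have r'_gt0 : (0 < r')%N by rewrite divn_gt0 // dvdn_leq // dvdn_gcdl.
apply/eqP; rewrite eqn_leq le_rn /=.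
apply: contraLR (coprime_natr_unit r'_gt0 co Eb'); rewrite -ltnNge => lt_rn.
have n'_gt1 : (1 < n')%N.
  rewrite ltnNge; apply: contraL lt_rn => le_n'1; rewrite -leqNgt En.
  by rewrite (leq_trans (leq_mul le_n'1 (leqnn d))) // mul1n dvdn_leq ?dvdn_gcdl.
have p_dvd_n : (pdiv n' %| n)%N by rewrite En dvdn_mulr ?pdiv_dvd.
rewrite -(divnK (pdiv_dvd n')) natrM unitrM negb_and.
by rewrite (n_nonunit _ (pdiv_prime n'_gt1) p_dvd_n) orbT.
Qed.

Lemma pchar_natr_prime_unit (R : comUnitRingType) q p :
  q \in [pchar R] -> prime p -> p != q -> (p%:R : R) \is a GRing.unit.
Proof.
move=> qchar p_pr neq_pq; have q_pr := pcharf_prime qchar.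
have co : coprime p q by rewrite prime_coprime // dvdn_prime2.
have [km kn Bezout _] := egcdnP q (prime_gt0 p_pr).
apply/unitrPr; exists km%:R; rewrite mulrC.
by rewrite -natrM Bezout (eqP co) natrD natrM (pcharf0 qchar) mulr0 add0r.
Qed.

Lemma pchar_pnat (R : comUnitRingType) q n :
    q \in [pchar R] -> (0 < n)%N ->
    (forall p, prime p -> (p %| n)%N -> ~~ ((p%:R : R) \is a GRing.unit)) ->
  q.-nat n.
Proof.
move=> qchar n_gt0 n_nonunit; apply/pnatP => // p p_pr p_dvd_n.
apply: contraNT (n_nonunit p p_pr p_dvd_n) => not_q.
exact: pchar_natr_prime_unit qchar p_pr not_q.
Qed.

Lemma mxtrace_pid (F : fieldType) n r :
  (r <= n)%N -> \tr (pid_mx r : 'M[F]_n) = r%:R.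
Proof.
move=> le_rn; rewrite /mxtrace.
under eq_bigr do rewrite mxE eqxx.
transitivity (\sum_(i < n | (i < r)%N) (1 : F)).
  by rewrite [RHS]big_mkcond; apply: eq_bigr => i _; case: (i < r)%N.
by rewrite -(big_ord_widen n (fun _ => 1)) // sumr_const card_ord.
Qed.

Lemma mxtrace_idem (F : fieldType) n (A : 'M[F]_n) :
  A *m A = A -> \tr A = (\rank A)%:R.
Proof.
(* A = L P U with L, U invertible and P = pid_mx (rank A); idempotence of A
   becomes P (U L) P = P, and then tr A = tr (P (U L) P) = tr P. *)
move=> AA; set L := col_ebase A; set U := row_ebase A.
set P : 'M[F]_n := pid_mx (\rank A).
have defA : L *m P *m U = A := mulmx_ebase A.
have uL : L \in unitmx := col_ebase_unit A.
have uU : U \in unitmx := row_ebase_unit A.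
have PP : P *m P = P by rewrite pid_mx_id ?rank_leq_row.
have PULP : P *m (U *m L) *m P = P.
  apply: (can_inj (mulKmx uL)); apply: (can_inj (mulmxK uU)).
  by rewrite !mulmxA defA -[A *m L *m P]mulmxA -mulmxA defA AA.
rewrite -[in LHS]defA -mulmxA mxtrace_mulC -mulmxA -{1}PP -mulmxA mxtrace_mulC.
by rewrite PULP mxtrace_pid ?rank_leq_row.
Qed.

Lemma map_tofrac_mx_inj (R : idomainType) m n :
  injective (map_mx (@tofrac R) : 'M_(m, n) -> 'M_(m, n)).
Proof.
move=> A B /matrixP eqAB; apply/matrixP => i j; apply/eqP.
by rewrite -tofrac_eq; have := eqAB i j; rewrite !mxE => ->.
Qed.

Lemma idem_mx_const_diag (R : idomainType) n (A : 'M[R]_n) (b : R) :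
    [pchar R] =i pred0 ->
    (forall p, prime p -> (p %| n)%N -> ~~ ((p%:R : R) \is a GRing.unit)) ->
  A *m A = A -> (forall i, A i i = b) -> A = 0 \/ A = 1%:M.
Proof.
move=> char0 n_nonunit AA diagA; pose B := map_mx (@tofrac R) A.
have BB : B *m B = B by rewrite -map_mxM AA.
have trB : \tr B = tofrac (n%:R * b).
  rewrite trace_map_mx /mxtrace; under eq_bigr do rewrite diagA.
  by rewrite sumr_const card_ord mulr_natl.
have Eb : n%:R * b = (\rank B)%:R.
  by apply/eqP; rewrite -tofrac_eq -trB mxtrace_idem // rmorph_nat.
have [r0|rn] := natr_ratio_trivial char0 n_nonunit (rank_leq_row B) Eb.
  left; apply: map_tofrac_mx_inj; rewrite map_mx0.
  by apply/eqP; rewrite -mxrank_eq0 r0.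
right; apply: map_tofrac_mx_inj; rewrite map_mx1.
have uB : B \in unitmx by rewrite -row_full_unit /row_full rn.
by rewrite -[LHS](mulKmx uB) BB mulVmx.
Qed.

Lemma maximal_pgroup_expn_mem (gT : finGroupType) (p : nat) (K L : {group gT}) g :
  (p.-group L)%g -> maximal K L -> g \in L -> (g ^+ p)%g \in K.
Proof.
move=> pL maxK Lg; apply: (subsetP (Phi_sub_max maxK)).
rewrite (Phi_joing pL) (subsetP (joing_subr _ _)) //.
by have := Mho_p_elt 1 Lg (mem_p_elt pL Lg); rewrite expn1.
Qed.

Lemma maximal_sub_group (gT : finGroupType) (K L S : {group gT}) g :
  maximal K L -> g \in L -> g \notin K -> K \subset S -> g \in S -> L \subset S.
Proof.
case/maxgroupP=> /proper_sub sKL maxK Lg notKg sKS Sg; apply: contraR notKg => not_sLS.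
have sK_LS : K \subset L :&: S by rewrite subsetI sKL.
rewrite -(maxK [group of L :&: S]) ?inE ?Lg // properEneq subsetIl andbT.
by apply: contraNneq not_sLS => <-; rewrite subsetIr.
Qed.

Lemma Sylow_atrans (gT : finGroupType) (T : finType) (to : {action gT &-> T})
    (G Q : {group gT}) (q : nat) :
    [transitive G, on [set: T] | to] -> (q.-Sylow(G) Q)%g -> q.-nat #|T| ->
  [transitive Q, on [set: T] | to].
Proof.
move=> trG sylQ qT; have /imsetP[x0 _ _] := trG.
have T_gt0 : (0 < #|T|)%N by apply/card_gt0P; exists x0.
(* |Q| = |T| |C_G[x0]|_q, and C_Q[x0] is a q-subgroup of C_G[x0]. *)
apply/imsetP; exists x0 => //; apply/eqP; rewrite eq_sym eqEcard subsetT cardsT /=.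
have qQ := pHall_pgroup sylQ.
have eG := card_orbit_stab to G x0; have eQ := card_orbit_stab to Q x0.
rewrite (atransP trG _ (in_setT x0)) cardsT in eG.
set C := 'C_G[x0 | to]%g in eG; set CQ := 'C_Q[x0 | to]%g in eQ.
have CQ_dvd : (#|CQ| %| #|C|`_q)%N.
  rewrite -(part_pnat_id (pgroupS (subsetIl _ _) qQ)).
  by apply: partn_dvd; rewrite ?cardG_gt0 ?cardSg ?setSI ?(pHall_sub sylQ).
have cardQ : #|Q| = (#|T| * #|C|`_q)%N.
  by rewrite (card_Hall sylQ) -eG partnM ?cardG_gt0 // part_pnat_id.
rewrite -(leq_pmul2r (cardG_gt0 'C_Q[x0 | to])) eQ cardQ leq_pmul2l //.
exact: dvdn_leq (part_gt0 _ _) CQ_dvd.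
Qed.

Lemma iter_last_neq (T : eqType) (f : T -> T) (z x : T) n :
  x != z -> iter n f x = z -> exists i, iter i f x != z /\ iter i.+1 f x = z.
Proof.
move=> nz_x; elim: n => [/eqP|n IHn fnx]; first by rewrite (negPf nz_x).
have [fnx_z|nz_fnx] := eqVneq (iter n f x) z; first exact: IHn.
by exists n.
Qed.

Section BasisVector.
Variables (T : finType) (R : nzRingType).
Local Notation vec := {ffun T -> R}.

Definition basis_vec (y : T) : vec := [ffun x => (x == y)%:R].

Lemma sum_basis_vec (u : vec) x : \sum_y u y * basis_vec y x = u x.
Proof.
under eq_bigr do rewrite ffunE mulr_natr mulrb eq_sym.
by rewrite -big_mkcond big_pred1_eq.
Qed.

Lemma basis_vec_expand (u : vec) : u = \sum_y [ffun x => u y * basis_vec y x].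
Proof.
apply/ffunP=> x; rewrite sum_ffunE -{1}(sum_basis_vec u x).
by under [in RHS]eq_bigr do rewrite ffunE.
Qed.

End BasisVector.

Section PermAction.
Variables (gT : finGroupType) (T : finType) (R : nzRingType).
Variable to : {action gT &-> T}.
Local Notation vec := {ffun T -> R}.
Implicit Types (u v w : vec) (g h : gT).

Lemma perm_act1 u : perm_act to 1 u = u.
Proof. by apply/ffunP=> x; rewrite ffunE invg1 act1. Qed.

Lemma perm_actM g h u : perm_act to (g * h) u = perm_act to h (perm_act to g u).
Proof. by apply/ffunP=> x; rewrite !ffunE invMg actM. Qed.

Lemma perm_actX g i u : perm_act to (g ^+ i) u = iter i (perm_act to g) u.
Proof. by elim: i => [|i IHi]; rewrite ?perm_act1 // expgSr perm_actM IHi. Qed.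

Lemma perm_act0 g : perm_act to g 0 = 0 :> vec.
Proof. by apply/ffunP=> x; rewrite !ffunE. Qed.

Lemma perm_actD g u v : perm_act to g (u + v) = perm_act to g u + perm_act to g v.
Proof. by apply/ffunP=> x; rewrite !ffunE. Qed.

Lemma perm_actZ g (a : R) u :
  perm_act to g [ffun x => a * u x] = [ffun x => a * perm_act to g u x].
Proof. by apply/ffunP=> x; rewrite !ffunE. Qed.

Lemma perm_actB g u v : perm_act to g (u - v) = perm_act to g u - perm_act to g v.
Proof. by apply/ffunP=> x; rewrite !ffunE. Qed.

Lemma perm_act_basis_vec g y :
  perm_act to g (basis_vec R y) = basis_vec R (to y g).
Proof.
apply/ffunP=> x; rewrite !ffunE; congr (nat_of_bool _)%:R.
by apply/eqP/eqP=> [<-|->]; rewrite ?actKV ?actK.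
Qed.

Lemma atrans_fixed_const (Q : {group gT}) w x :
    [transitive Q, on [set: T] | to] ->
    (forall h, h \in Q -> perm_act to h w = w) ->
  w = [ffun=> w x].
Proof.
move=> trQ fix_w; apply/ffunP=> y; rewrite ffunE.
have [h Qh ->] := atransP2 trQ (in_setT x) (in_setT y).
by rewrite -{1}(fix_w h Qh) ffunE actK.
Qed.

Lemma perm_act_fixer_group_set u : group_set [set h | perm_act to h u == u].
Proof.
apply/group_setP; split=> [|g h]; first by rewrite inE perm_act1.
by rewrite !inE perm_actM => /eqP-> /eqP->.
Qed.

Lemma perm_act_fixed_normal (K : {set gT}) h u :
    (h \in 'N(K))%g -> (forall k, k \in K -> perm_act to k u = u) ->
  forall k, k \in K -> perm_act to k (perm_act to h u) = perm_act to h u.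
Proof.
move=> nKh fix_u k Kk; have Kkh : (k ^ h^-1)%g \in K by rewrite memJ_norm ?groupV.
by rewrite -perm_actM conjgCV perm_actM fix_u.
Qed.

Definition act_diff g u := perm_act to g u - u.

Lemma act_diffE g u x : act_diff g u x = u (to x g^-1%g) - u x.
Proof. by rewrite !ffunE. Qed.

Lemma iter_act_diffE g k u x :
  iter k (act_diff g) u x =
    \sum_(i < k.+1) (('X - 1 : {poly R}) ^+ k)`_i * iter i (perm_act to g) u x.
Proof.
elim: k x => [|k IHk] x; first by rewrite big_ord1 expr0 coef1 mul1r.
rewrite iterS act_diffE !IHk exprSr mulrBr mulr1.
set p : {poly R} := ('X - 1) ^+ k.
have p_out : p`_k.+1 = 0 by rewrite nth_default // /p -polyC1 size_exp_XsubC.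
under [in RHS]eq_bigr do rewrite coefB coefMX mulrBl.
rewrite sumrB [X in _ = X - _]big_ord_recl [X in _ = _ - X]big_ord_recr /=.
rewrite p_out !mul0r add0r addr0; congr (_ - _).
by apply: eq_bigr => i _; rewrite add0n ffunE.
Qed.

Lemma iter_act_diff_pchar q g u :
  q \in [pchar R] -> iter q (act_diff g) u = perm_act to (g ^+ q) u - u.
Proof.
move=> qchar; have qpchar : q \in [pchar {poly R}] by rewrite pchar_poly.
have XB1q : ('X - 1 : {poly R}) ^+ q = 'X^q - 1.
  rewrite -(pFrobenius_autE qpchar) (pFrobenius_autB_comm _ (commr1 _)).
  by rewrite pFrobenius_aut1 pFrobenius_autE.
apply/ffunP=> x; rewrite iter_act_diffE perm_actX !ffunE XB1q.
under eq_bigr do rewrite coefB coefXn coef1 mulrBl !mulr_natl !mulrb.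
by rewrite sumrB -!big_mkcond !(big_ord1_eq _ (fun i => iter i (perm_act to g) u x)) ltnSn.
Qed.

End PermAction.

Section Submodule.
Variables (gT : finGroupType) (G : {group gT}) (T : finType) (R : nzRingType).
Variables (to : {action gT &-> T}) (M : {ffun T -> R} -> Prop).
Hypothesis subM : is_RGsubmod G to M.

Lemma RGsubmodS (H : {group gT}) : H \subset G -> is_RGsubmod H to M.
Proof.
case: subM => M0 MD MZ MA sHG; split=> // g u Hg; apply: MA.
exact: subsetP Hg.
Qed.

Lemma RGsubmodB u v : M u -> M v -> M (u - v).
Proof.
case: subM => _ MD MZ _ Mu Mv; apply: MD => //.
by have := MZ (-1) v Mv; congr M; apply/ffunP=> x; rewrite !ffunE mulN1r.
Qed.

Lemma RGsubmod_sum (I : Type) (r : seq I) (F : I -> {ffun T -> R}) :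
  (forall i, M (F i)) -> M (\sum_(i <- r) F i).
Proof.
by case: subM => M0 MD _ _ MF; elim/big_rec: _ => // i v _; apply: MD.
Qed.

End Submodule.

Lemma RGsubmod_fixed_normal (gT : finGroupType) (K L : {group gT}) (T : finType)
    (R : nzRingType) (to : {action gT &-> T}) (V : {ffun T -> R} -> Prop) :
    L \subset 'N(K)%g -> is_RGsubmod L to V ->
  is_RGsubmod L to (fun u => V u /\ forall k, k \in K -> perm_act to k u = u).
Proof.
move=> nKL [V0 VD VZ VA].
split=> [|u1 u2 [Vu1 fix1] [Vu2 fix2]|a u [Vu fix_u]|h u Lh [Vu fix_u]].
- by split=> // k _; rewrite perm_act0.
- by split=> [|k Kk]; [apply: VD | rewrite perm_actD fix1 ?fix2].
- by split=> [|k Kk]; [apply: VZ | rewrite perm_actZ fix_u].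
split; first exact: VA.
by apply: perm_act_fixed_normal fix_u; rewrite (subsetP nKL).
Qed.

Section FixedVector.
Variables (gT : finGroupType) (T : finType) (R : nzRingType).
Variables (to : {action gT &-> T}) (q : nat).
Hypothesis qchar : q \in [pchar R].
Local Notation vec := {ffun T -> R}.

Lemma RGsubmod_cyclic_fixed (L : {group gT}) (W : vec -> Prop) g w0 :
    is_RGsubmod L to W -> g \in L -> perm_act to (g ^+ q) w0 = w0 ->
    W w0 -> w0 != 0 ->
  exists2 w, W w /\ w != 0 & perm_act to g w = w.
Proof.
move=> subW Lg fix_w0 Ww0 nz_w0; pose w_ i := iter i (act_diff to g) w0.
have Ww i : W (w_ i).
  elim: i => [|i IHi] //; apply: (RGsubmodB subW) => //.
  by case: subW => _ _ _; apply.
have w_q : w_ q = 0 by rewrite /w_ (iter_act_diff_pchar _ _ _ qchar) fix_w0 subrr.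
have [i [nz_wi wi1]] := iter_last_neq nz_w0 w_q.
by exists (w_ i) => //; apply/eqP; rewrite -subr_eq0 -wi1 iterS.
Qed.

(* Induct through a maximal subgroup K, which is normal of index q: the K-fixed
   part of V is L-stable, and for g in L \ K its power g^q lies in K. *)
Lemma pgroup_fixed_vector (L : {group gT}) (V : vec -> Prop) v :
    (q.-group L)%g -> is_RGsubmod L to V -> V v -> v != 0 ->
  exists2 w, V w /\ w != 0 & forall h, h \in L -> perm_act to h w = w.
Proof.
move=> qL; have [n] := ubnP #|L|.
elim: n L qL V v => // n IHn L qL V v ltLn subV Vv nz_v.
have [L1 | ntL] := eqsVneq L 1%g.
  by exists v => // h; rewrite L1 => /set1P->; apply: perm_act1.
have [L1 | [K maxK _]] := maximal_exists (sub1G L); first by rewrite -L1 eqxx in ntL.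
have [sKL [g Lg notKg]] := properP (maxgroupp maxK).
have ltKn : (#|K| < n)%N.
  by apply: leq_trans (proper_card (maxgroupp maxK)) _; rewrite -ltnS.
have [w0 [Vw0 nz_w0] fix_w0] :=
  IHn K (pgroupS sKL qL) V v ltKn (RGsubmodS subV sKL) Vv nz_v.
have subW := RGsubmod_fixed_normal (normal_norm (p_maximal_normal qL maxK)) subV.
have Kgq := maximal_pgroup_expn_mem qL maxK Lg.
have [w [[Vw fix_w] nz_w] g_w] := RGsubmod_cyclic_fixed subW Lg (fix_w0 _ Kgq) (conj Vw0 fix_w0) nz_w0.
pose S := Group (perm_act_fixer_group_set to w).
have sLS : L \subset S.
  apply: maximal_sub_group maxK Lg notKg _ _; last by rewrite inE g_w.
  by apply/subsetP=> k Kk; rewrite inE fix_w.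
by exists w => // h /(subsetP sLS); rewrite inE => /eqP.
Qed.

End FixedVector.

Section PrimeCharacteristic.
Variables (gT : finGroupType) (G : {group gT}) (T : finType) (R : idomainType).
Variables (to : {action gT &-> T}) (q : nat).
Hypotheses (qchar : q \in [pchar R]) (trG : [transitive G, on [set: T] | to]).
Hypothesis qT : q.-nat #|T|.
Local Notation vec := {ffun T -> R}.

Lemma RGsubmod_const_vector (V : vec -> Prop) v :
  is_RGsubmod G to V -> V v -> v != 0 -> exists2 a : R, a != 0 & V [ffun=> a].
Proof.
move=> subV Vv nz_v; have [Q sylQ] := Sylow_exists q G.
have [w [Vw nz_w] fix_w] := pgroup_fixed_vector qchar (pHall_pgroup sylQ)
  (RGsubmodS subV (pHall_sub sylQ)) Vv nz_v.
have /imsetP[x _ _] := trG.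
have w_const := atrans_fixed_const x (Sylow_atrans trG sylQ qT) fix_w.
exists (w x); last by rewrite -w_const.
by apply: contraNneq nz_w => wx0; rewrite w_const wx0; apply/eqP/ffunP=> y; rewrite !ffunE.
Qed.

Lemma disjoint_submod_trivial_pchar (M N : vec -> Prop) :
    is_RGsubmod G to M -> is_RGsubmod G to N -> (forall v, M v -> N v -> v = 0) ->
  (forall m, M m -> m = 0) \/ (forall n, N n -> n = 0).
Proof.
move=> subM subN MN0.
have trivial_or_nonzero (V : vec -> Prop) :
    (forall v, V v -> v = 0) \/ exists2 v, V v & v != 0.
  case: (classic (exists2 v, V v & v != 0)) => [|noV]; [by right | left=> v Vv].
  by apply: NNPP => /eqP nz_v; apply: noV; exists v.
have [|[m Mm nz_m]] := trivial_or_nonzero M; first by left.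
have [|[n Nn nz_n]] := trivial_or_nonzero N; first by right.
have [a nz_a Ma] := RGsubmod_const_vector subM Mm nz_m.
have [b nz_b Nb] := RGsubmod_const_vector subN Nn nz_n.
have [_ _ MZ _] := subM; have [_ _ NZ _] := subN.
have /imsetP[x _ _] := trG.
have ab_eq : [ffun y => a * [ffun=> b] y] = [ffun y => b * [ffun=> a] y] :> vec.
  by apply/ffunP=> y; rewrite !ffunE mulrC.
have Nba : N [ffun y => b * [ffun=> a] y] by rewrite -ab_eq; apply: NZ.
have /ffunP/(_ x) := MN0 _ (MZ b _ Ma) Nba.
by rewrite !ffunE => /eqP; rewrite mulf_eq0 (negPf nz_a) (negPf nz_b).
Qed.

End PrimeCharacteristic.

Section Projection.
Variables (gT : finGroupType) (G : {group gT}) (T : finType) (R : nzRingType).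
Variables (to : {action gT &-> T}) (M N : {ffun T -> R} -> Prop).
Hypotheses (subM : is_RGsubmod G to M) (subN : is_RGsubmod G to N).
Hypothesis MN0 : forall v, M v -> N v -> v = 0.
Hypothesis MN_span : forall v, exists m n, [/\ M m, N n & v = m + n].
Local Notation vec := {ffun T -> R}.

Lemma projN_exists (v : vec) : exists n, N n /\ M (v - n).
Proof. by have [m [n [Mm Nn ->]]] := MN_span v; exists n; rewrite addrK. Qed.

Definition projN (v : vec) : vec :=
  proj1_sig (constructive_indefinite_description _ (projN_exists v)).

Lemma projN_spec v : N (projN v) /\ M (v - projN v).
Proof. exact: proj2_sig (constructive_indefinite_description _ (projN_exists v)). Qed.

Lemma projN_unique v n : N n -> M (v - n) -> projN v = n.
Proof.
move=> Nn Mvn; have [Npv Mvpv] := projN_spec v.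
apply/eqP; rewrite -subr_eq0; apply/eqP; apply: MN0; last exact: (RGsubmodB subN).
have -> : projN v - n = (v - n) - (v - projN v) by rewrite [RHS]addrC opprB addrA subrK.
exact: (RGsubmodB subM).
Qed.

Lemma projN_id n : N n -> projN n = n.
Proof. by move=> Nn; apply: projN_unique; rewrite ?subrr; case: subM. Qed.

Lemma projN_M m : M m -> projN m = 0.
Proof. by move=> Mm; apply: projN_unique; rewrite ?subr0; case: subN. Qed.

Lemma projN_act g v : g \in G -> projN (perm_act to g v) = perm_act to g (projN v).
Proof.
move=> Gg; have [Npv Mvpv] := projN_spec v.
apply: projN_unique; first by case: subN => _ _ _; apply.
by rewrite -perm_actB; case: subM => _ _ _; apply.
Qed.

Lemma projN_expand v x : projN v x = \sum_y v y * projN (basis_vec R y) x.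
Proof.
pose s := \sum_y [ffun z => v y * projN (basis_vec R y) z].
have [_ _ MZ _] := subM; have [_ _ NZ _] := subN.
suff -> : projN v = s by rewrite sum_ffunE; under eq_bigr do rewrite ffunE.
apply: projN_unique; first by apply: (RGsubmod_sum subN) => y; apply/NZ/(projN_spec _).1.
rewrite [v in v - _]basis_vec_expand -sumrB; apply: (RGsubmod_sum subM) => y.
have -> : [ffun z => v y * basis_vec R y z] - [ffun z => v y * projN (basis_vec R y) z] =
          [ffun z => v y * (basis_vec R y - projN (basis_vec R y)) z].
  by apply/ffunP=> z; rewrite !ffunE mulrBr.
exact/MZ/(projN_spec _).2.
Qed.

End Projection.

Section CharacteristicZero.
Variables (gT : finGroupType) (G : {group gT}) (T : finType) (R : idomainType).
Variables (to : {action gT &-> T}) (M N : {ffun T -> R} -> Prop).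
Hypotheses (subM : is_RGsubmod G to M) (subN : is_RGsubmod G to N).
Hypothesis MN0 : forall v, M v -> N v -> v = 0.
Hypothesis MN_span : forall v, exists m n, [/\ M m, N n & v = m + n].
Hypothesis char0 : [pchar R] =i pred0.
Hypothesis trG : [transitive G, on [set: T] | to].
Hypothesis T_nonunit :
  forall p, prime p -> (p %| #|T|)%N -> ~~ ((p%:R : R) \is a GRing.unit).
Local Notation P := (projN MN_span).
Let P_id := projN_id subM subN MN0 MN_span.
Let P_act := projN_act subM subN MN0 MN_span.
Let P_expand := projN_expand subM subN MN0 MN_span.

Lemma projN_diag_const x y : P (basis_vec R x) x = P (basis_vec R y) y.
Proof.
have [g Gg ->] := atransP2 trG (in_setT x) (in_setT y).
by rewrite -perm_act_basis_vec P_act // ffunE actK.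
Qed.

Lemma projN_trivial_char0 : (forall v, P v = 0) \/ (forall v, P v = v).
Proof.
pose A : 'M[R]_#|T| := \matrix_(i, j) P (basis_vec R (enum_val j)) (enum_val i).
have AE x y : A (enum_rank x) (enum_rank y) = P (basis_vec R y) x.
  by rewrite mxE !enum_rankK.
have AA : A *m A = A.
  apply/matrixP=> i j; rewrite !mxE -[in RHS](P_id (projN_spec MN_span _).1).
  rewrite P_expand (reindex _ (onW_bij _ (@enum_val_bij T))) /=.
  by apply: eq_bigr => k _; rewrite !mxE mulrC.
have /imsetP[x0 _ _] := trG.
have diagA i : A i i = P (basis_vec R x0) x0 by rewrite mxE (projN_diag_const _ x0).
have [A0|A1] := idem_mx_const_diag char0 T_nonunit AA diagA.
  left=> v; apply/ffunP=> x; rewrite P_expand ffunE big1 // => y _.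
  by rewrite -AE A0 mxE mulr0.
right=> v; apply/ffunP=> x; rewrite P_expand -[RHS]sum_basis_vec.
by apply: eq_bigr => y _; rewrite -AE A1 !mxE (inj_eq enum_rank_inj) ffunE.
Qed.

End CharacteristicZero.

Unset Implicit Arguments.

Theorem lemma3p1 (gT : finGroupType) (G : {group gT}) (R : idomainType)
  (T : finType) (to : {action gT &-> T})
  (htrans : [transitive G, on [set: T] | to])
  (hprimes : forall p : nat, prime p -> (p %| #|T|)%N ->
                ~~ ((p%:R : R) \is a GRing.unit)) :
  RG_perm_indecomposable G R to.
Proof.
have /imsetP[x0 _ _] := htrans.
split.
  exists (basis_vec R x0) => /ffunP/(_ x0).
  by rewrite !ffunE eqxx => /eqP; rewrite oner_eq0.
move=> M N subM subN MN0 MN_span.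
have [[q qchar]|no_char] := classic (exists q, q \in [pchar R]).
  have T_gt0 : (0 < #|T|)%N by apply/card_gt0P; exists x0.
  have qT := pchar_pnat qchar T_gt0 hprimes.
  exact: (disjoint_submod_trivial_pchar qchar htrans qT subM subN MN0).
have char0 : [pchar R] =i pred0.
  by move=> q; rewrite inE; apply/negP => qchar; apply: no_char; exists q.
have [P0|P1] := projN_trivial_char0 subM subN MN0 MN_span char0 htrans hprimes.
  by right=> n Nn; rewrite -(projN_id subM subN MN0 MN_span Nn) P0.
by left=> m Mm; rewrite -(projN_M subM subN MN0 MN_span Mm) P1.
Qed.
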